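(* Let $p(x),q(x)\in\mathbb{C}[x]$, let $b\geq 2$ be an integer, and let $\alpha=(\alpha_0,\dots,\alpha_{m-1})\in\mathbb{N}^m$. Then the function $n\mapsto u_{p,q,b,\alpha}(n)$ has a rational generating function; that is, there exist $P(x),Q(x)\in\mathbb{C}[x]$ with $Q(0)\neq 0$ such that $\sum_{n\geq 0}u_{p,q,b,\alpha}(n)x^n=P(x)/Q(x)$ as formal power series.
   Context: $\mathbb{N}=\{0,1,2,\dots\}$. For $n\geq 0$ define $F_{p,q,b,n}(x)=q(x)\prod_{i=0}^{n-1}p(x^{b^i})=\sum_{i\geq 0}c_i(n)x^i$, with the convention $c_i(n)=0$ for $i<0$. Define $$u_{p,q,b,\alpha}(n)=\sum_{k} c_k(n)^{\alpha_0}c_{k+1}(n)^{\alpha_1}\cdots c_{k+m-1}(n)^{\alpha_{m-1}},$$ the sum over all integers $k$ (only finitely many terms are nonzero when some exponent is positive; take $0^0=1$ and assume $\alpha\neq 0$). *)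

(* Complex numbers are modelled as R[i] = complex R for an
   arbitrary R : realType (mathcomp-analysis reals; real-closed complex). *)
From mathcomp Require Import all_boot all_algebra.
From mathcomp Require Import reals complex.
Set Implicit Arguments. Unset Strict Implicit. Unset Printing Implicit Defensive.
Import GRing.Theory Num.Theory.
Local Open Scope ring_scope.

Definition Fpoly (C : comNzRingType) (p q : {poly C}) (b n : nat) : {poly C} :=
  q * \prod_(i < n) (p \Po 'X^(b ^ i)).

Definition coefc (C : comNzRingType) (p q : {poly C}) (b n : nat) (k : int) : C :=
  match k with
  | Posz k' => (Fpoly p q b n)`_k'
  | Negz _ => 0
  end.

(* u_{p,q,b,alpha}(n) = sum over integers k of
     c_k(n)^{alpha_0} ... c_{k+m-1}(n)^{alpha_{m-1}}   (with 0^0 = 1).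
   When some alpha_j > 0, the summand vanishes unless 0 <= k + j < size F,
   i.e. unless -(m-1) <= k < size F; we sum over k in [-m, size F + m),
   which contains all possibly nonzero terms. *)
Definition useq (C : comNzRingType) (p q : {poly C}) (b m : nat)
    (alpha : 'I_m -> nat) (n : nat) : C :=
  \sum_(i <- iota 0 (size (Fpoly p q b n) + m + m))
     \prod_(j < m) coefc p q b n ((i%:Z - m%:Z) + (j : nat)%:Z) ^+ alpha j.

From mathcomp Require Import all_boot all_algebra.
From mathcomp Require Import reals complex.
From mathcomp Require Import zify ring.
Set Implicit Arguments. Unset Strict Implicit. Unset Printing Implicit Defensive.
Import GRing.Theory Num.Theory.
Local Open Scope ring_scope.

(* Repeat each offset j exactly alpha_j times to get offsets d_1, ..., d_r, so
   that u(n) = sum_k prod_t c_{k + d_t}(n).  Writing F_n = q G_n with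
   G_n = prod_{i<n} p(x^(b^i)), u(n) is a fixed linear combination of the
   correlations T_n(e) = sum_k prod_t g_{k + e_t}(n) of the coefficients of G_n,
   for shift vectors e in [-M, M]^r, where M = size p + size q + m.  Since
   G_(n+1) = p * G_n(x^b), splitting k by its residue modulo b expresses every
   T_(n+1)(e) linearly through the T_n(e'), and b >= 2 keeps the new shifts in
   [-M, M].  Hence u(n) = w A^n v for a finite transfer matrix A, and by
   Cayley-Hamilton the reversed characteristic polynomial of A is a denominator
   with constant coefficient 1. *)

Definition rational_gf (C : comNzRingType) (u : nat -> C) : Prop :=
  exists P Q : {poly C}, Q`_0 != 0 /\
    forall n, P`_n = \sum_(i < n.+1) Q`_i * u (n - i)%N.

Lemma eq_rational_gf (C : comNzRingType) (u v : nat -> C) :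
  u =1 v -> rational_gf u -> rational_gf v.
Proof.
move=> eq_uv [P [Q [Q0 PQ]]]; exists P, Q; split=> // n.
by rewrite PQ; apply: eq_bigr => i _; rewrite eq_uv.
Qed.

Lemma big_ord_trunc (C : nmodType) (n k : nat) (F : nat -> C) :
  (k <= n)%N -> (forall i, (k <= i < n)%N -> F i = 0) ->
  \sum_(i < n) F i = \sum_(i < k) F i.
Proof.
move=> le_kn F0; rewrite (big_ord_widen _ _ le_kn) [RHS]big_mkcond /=.
by apply: eq_bigr => i _; case: ifPn; rewrite // -leqNgt => ?; rewrite F0 ?ltn_ord ?andbT.
Qed.

Lemma rational_gf_mxpow (C : comNzRingType) (D : nat) (A : 'M[C]_D)
    (w : 'rV_D) (v : 'cV_D) :
  rational_gf (fun n => (w *m A ^+ n *m v) 0 0).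
Proof.
case: D A w v => [|D] A w v.
  exists 0, 1; split=> [|n]; first by rewrite coef1 oner_neq0.
  by rewrite coef0 big1 // => i _; rewrite [w]thinmx0 !mul0mx mxE mulr0.
pose chi := char_poly A.
have size_chi : size chi = D.+2 := size_char_poly A.
have lead_chi : chi`_D.+1 = 1.
  by have /monicP := char_poly_monic A; rewrite /lead_coef size_chi.
pose Q := \poly_(i < D.+2) chi`_(D.+1 - i).
have coefQ j : Q`_j = if (j < D.+2)%N then chi`_(D.+1 - j) else 0 by rewrite coef_poly.
pose u n := (w *m A ^+ n *m v) 0 0.
exists (\poly_(i < D.+1) \sum_(j < i.+1) Q`_j * u (i - j)%N), Q.
split=> [|n]; first by rewrite coefQ subn0 lead_chi oner_neq0.
rewrite coef_poly; case: ltnP => // le_Dn.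
rewrite (@big_ord_trunc _ n.+1 D.+2 (fun j => Q`_j * u (n - j)%N)) => [|//|j]; last first.
  by case/andP=> lt_Dj _; rewrite coefQ ltnNge lt_Dj mul0r.
have -> : \sum_(j < D.+2) Q`_j * u (n - j)%N =
          (w *m (A ^+ (n - D.+1) * horner_mx A chi) *m v) 0 0.
  rewrite -[chi in horner_mx _ chi]coefK poly_def size_chi linear_sum /=.
  rewrite mulr_sumr mulmx_sumr mulmx_suml summxE (reindex_inj rev_ord_inj) /=.
  apply: eq_bigr => j _; have lt_jD := ltn_ord j.
  rewrite coefQ ifT; last lia.
  rewrite linearZ /= rmorphXn /= horner_mx_X -scalerAr -scalemxAr -scalemxAl mxE -exprD.
  by congr (chi`_ _ * (w *m A ^+ _ *m v) 0 0); lia.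
by rewrite Cayley_Hamilton mulr0 mulmx0 mul0mx mxE.
Qed.

Section IntegerSums.
Variable V : nmodType.
Implicit Types (f g : int -> V).

Definition sumz_win f (lo len : nat) : V := \sum_(i < len) f (i%:Z - lo%:Z).

Definition sumz f (B : nat) : V := sumz_win f B (B + B).

Lemma sumz_win_widen f lo len lo' len' :
  (forall z, f z != 0 -> - lo%:Z <= z < len%:Z - lo%:Z) ->
  (lo <= lo')%N -> (len + lo' <= len' + lo)%N ->
  sumz_win f lo' len' = sumz_win f lo len.
Proof.
move=> supp_f le_lo le_len.
have f0 z : ~~ (- lo%:Z <= z < len%:Z - lo%:Z) -> f z = 0.
  by move=> out_z; apply/eqP; apply: contraNT out_z; apply: supp_f.
rewrite /sumz_win -!(big_mkord xpredT (fun i => f (i%:Z - _))).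
rewrite (@big_cat_nat _ _ _ (lo' - lo)) ?leq0n //=; last lia.
rewrite (@big_cat_nat _ _ _ (lo' - lo + len) (lo' - lo)) //=; [|lia|lia].
rewrite [X in X + _]big1_seq ?add0r => [|i]; last first.
  by rewrite mem_index_iota => /andP[_ /andP[? ?]]; apply: f0; lia.
rewrite [X in _ + X]big1_seq ?addr0 => [|i]; last first.
  by rewrite mem_index_iota => /andP[_ /andP[? ?]]; apply: f0; lia.
rewrite -{1}[(lo' - lo)%N]add0n big_addn addKn.
by apply: eq_bigr => i _; congr f; lia.
Qed.

Lemma sumz_win_eq f lo len lo' len' :
  (forall z, f z != 0 -> - lo%:Z <= z < len%:Z - lo%:Z) ->
  (forall z, f z != 0 -> - lo'%:Z <= z < len'%:Z - lo'%:Z) ->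
  sumz_win f lo' len' = sumz_win f lo len.
Proof.
move=> supp_f supp_f'; set lo2 := (lo + lo')%N; set len2 := (len + len' + lo2)%N.
rewrite -(@sumz_win_widen f lo len lo2 len2) /lo2 /len2 //; try lia.
by rewrite (@sumz_win_widen f lo' len' lo2 len2) /lo2 /len2 //; lia.
Qed.

Lemma sumz_widen f B B' :
  (forall z, f z != 0 -> - B%:Z <= z < B%:Z) -> (B <= B')%N ->
  sumz f B' = sumz f B.
Proof.
move=> supp_f le_B; apply: sumz_win_widen => //; last lia.
by move=> z /supp_f; lia.
Qed.

Lemma eq_sumz f g B : f =1 g -> sumz f B = sumz g B.
Proof. by move=> eq_fg; apply: eq_bigr => i _; rewrite eq_fg. Qed.

Lemma sumz_sum (I : finType) (F : I -> int -> V) B :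
  sumz (fun k => \sum_i F i k) B = \sum_i sumz (F i) B.
Proof. exact: exchange_big. Qed.

Lemma big_ord_mul (F : nat -> V) n b :
  \sum_(i < n * b) F i = \sum_(i < n) \sum_(r < b) F (i * b + r)%N.
Proof.
elim: n => [|n IHn]; first by rewrite mul0n !big_ord0.
by rewrite mulSnr big_split_ord /= IHn big_ord_recr.
Qed.

Lemma sumz_split_mod f b B :
  sumz f (b * B) = \sum_(r < b) sumz (fun k => f (b%:Z * k + r%:Z)) B.
Proof.
rewrite /sumz /sumz_win -mulnDr mulnC (big_ord_mul (fun i => f (i%:Z - _))).
rewrite exchange_big /=.
by apply: eq_bigr => r _; apply: eq_bigr => i _; congr f; lia.
Qed.

End IntegerSums.

Lemma sumz_mull (C : pzSemiRingType) (c : C) (f : int -> C) B :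
  sumz (fun k => c * f k) B = c * sumz f B.
Proof. by rewrite /sumz /sumz_win mulr_sumr. Qed.

Section IntegerCoefficients.
Variable C : comNzRingType.
Implicit Types P Q : {poly C}.

Definition coefz P (z : int) : C := if z is Posz k then P`_k else 0.

Lemma coefz_neg P z : z < 0 -> coefz P z = 0.
Proof. by case: z. Qed.

Lemma coefz_supp P z : coefz P z != 0 -> 0 <= z < (size P)%:Z.
Proof.
case: z => [k|k]; last by rewrite /= eqxx.
rewrite /=; apply: contraR => out_k.
by rewrite nth_default //; lia.
Qed.

Lemma prod_coefz_supp P r (e : 'I_r -> int) (t0 : 'I_r) (K : nat) k :
  - K%:Z <= e t0 <= K%:Z -> \prod_t coefz P (k + e t) != 0 ->
  - K%:Z <= k < (size P + K)%:Z.
Proof.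
move=> e_t0; apply: contraR => out_k; rewrite (bigD1 t0) //=.
have -> : coefz P (k + e t0) = 0.
  by apply/eqP; apply: contraNT out_k => /coefz_supp; lia.
by rewrite mul0r.
Qed.

Lemma coefzM P Q z : coefz (P * Q) z = \sum_(j < size P) P`_j * coefz Q (z - j%:Z).
Proof.
case: z => [k|k] /=; last first.
  by rewrite big1 // => j _; rewrite coefz_neg ?mulr0 //; lia.
rewrite coefM.
rewrite (@big_ord_trunc _ k.+1 (minn k.+1 (size P)) (fun j => P`_j * Q`_(k - j)));
  [|exact: geq_minl|]; last first.
  move=> j /andP[]; rewrite geq_min => /orP[le_kj|le_Pj] lt_jk.
    by rewrite ltnNge le_kj in lt_jk.
  by rewrite nth_default ?mul0r.
rewrite (@big_ord_trunc _ (size P) (minn k.+1 (size P))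
           (fun j => P`_j * coefz Q (k%:Z - j%:Z)));
  [|exact: geq_minr|]; last first.
  move=> j /andP[lt_j _]; case: (leqP (size P) j) => [le_Pj|lt_jP].
    by rewrite nth_default ?mul0r.
  by rewrite coefz_neg ?mulr0 //; lia.
apply: eq_bigr => j _; have lt_jk : (j < k.+1)%N by have := ltn_ord j; lia.
by rewrite subzn.
Qed.

Lemma coefz_comp_Xn P (b : nat) (y : int) (r : nat) : (r < b)%N ->
  coefz (P \Po 'X^b) (b%:Z * y + r%:Z) = if r == 0%N then coefz P y else 0.
Proof.
move=> lt_rb; case: y => [k|k].
  have -> : b%:Z * k%:Z + r%:Z = Posz (k * b + r) by lia.
  rewrite /= coef_comp_poly_Xn; last lia.
  rewrite dvdn_addr ?dvdn_mull // divnMDl ?divn_small ?addn0; [|lia|lia].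
  by case: (posnP r) => [->|r_gt0]; rewrite ?dvdn0 // gtnNdvd.
by rewrite coefz_neg; [case: ifP | rewrite NegzE; lia].
Qed.

End IntegerCoefficients.

Lemma sum_collect (C : pzSemiRingType) (I T : finType) (a : I -> C) (f : I -> T)
    (g : T -> C) :
  \sum_(t : T) (\sum_(i : I) a i * (f i == t)%:R) * g t = \sum_(i : I) a i * g (f i).
Proof.
under eq_bigr => t _ do rewrite mulr_suml.
rewrite exchange_big /=; apply: eq_bigr => i _.
rewrite (bigD1 (f i)) //= eqxx mulr1 big1 ?addr0 // => t /negPf ne_t.
by rewrite eq_sym ne_t mulr0 mul0r.
Qed.

Lemma prodr_if0 (C : comNzRingType) (I : finType) (c : pred I) (x : I -> C) :
  \prod_i (if c i then x i else 0) = [forall i, c i]%:R * \prod_i x i.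
Proof.
case: (boolP [forall i, c i]) => [/forallP c_all | /forallPn [i /negPf c_i]].
  by rewrite mul1r; apply: eq_bigr => i _; rewrite c_all.
by rewrite mul0r (bigD1 i) //= c_i mul0r.
Qed.

Section TransferMatrix.
Variables (C : comNzRingType) (p : {poly C}) (b r M : nat).

Definition Gpoly n := \prod_(i < n) (p \Po 'X^(b ^ i)).

Lemma GpolyS n : Gpoly n.+1 = p * (Gpoly n \Po 'X^b).
Proof.
rewrite /Gpoly big_ord_recl expn0 comp_polyXr rmorph_prod; congr (_ * _).
by apply: eq_bigr => i _; rewrite /= -comp_polyA comp_Xn_poly -exprM expnS.
Qed.

(* A shift vector e in [-M, M]^r, each e_t stored as the ordinal e_t + M. *)
Definition shifts := {ffun 'I_r -> 'I_(M + M).+1}.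

Definition shiftz (i : 'I_(M + M).+1) : int := i%:Z - M%:Z.

Lemma shiftz_bound i : - M%:Z <= shiftz i <= M%:Z.
Proof. by rewrite /shiftz; have := ltn_ord i; lia. Qed.

Definition corr_term n (s : shifts) (k : int) : C :=
  \prod_t coefz (Gpoly n) (k + shiftz (s t)).

Definition corr n (s : shifts) : C := sumz (corr_term n s) (size (Gpoly n) + M).

Hypothesis r_gt0 : (0 < r)%N.

Lemma corr_term_supp n s k : corr_term n s k != 0 ->
  - (size (Gpoly n) + M)%:Z <= k < (size (Gpoly n) + M)%:Z.
Proof.
have := shiftz_bound (s (Ordinal r_gt0)).
by move/(prod_coefz_supp (e := fun t => shiftz (s t))) => supp /supp; lia.
Qed.

Lemma corr_sumz n s B : (size (Gpoly n) + M <= B)%N -> sumz (corr_term n s) B = corr n s.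
Proof. by apply: sumz_widen; apply: corr_term_supp. Qed.

Hypotheses (b_ge2 : (2 <= b)%N) (size_p : (size p <= M)%N).

(* In x = (J, rho), J t indexes the coefficient of p taken in the t-th factor and
   rho is the residue of the summation index modulo b. *)
Definition digits := ({ffun 'I_r -> 'I_(size p)} * 'I_b)%type.

Definition step_offset (s : shifts) (x : digits) t : int :=
  x.2%:Z + shiftz (s t) - (x.1 t)%:Z.

Definition step_weight (s : shifts) (x : digits) : C :=
  (\prod_t p`_(x.1 t)) * [forall t, (step_offset s x t %% b)%Z == 0]%:R.

Definition step_shift (s : shifts) (x : digits) : shifts :=
  [ffun t => inord (absz ((step_offset s x t %/ b)%Z + M%:Z))].

Definition transfer (s s' : shifts) : C :=
  \sum_(x : digits) step_weight s x * (step_shift s x == s')%:R.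

Lemma shiftz_step s x t : shiftz (step_shift s x t) = (step_offset s x t %/ b)%Z.
Proof.
rewrite /step_shift ffunE /shiftz.
have b_gt0 : 0 < b%:Z by lia.
have := modz_ge0 (step_offset s x t) (lt0r_neq0 b_gt0).
have := ltz_pmod (step_offset s x t) b_gt0.
have := divz_eq (step_offset s x t) b%:Z.
have := shiftz_bound (s t); have := ltn_ord (x.1 t); have := ltn_ord x.2.
rewrite /step_offset; set q := (_ %/ _)%Z; set m := (_ %% _)%Z.
by move=> *; rewrite inordK; nia.
Qed.

Lemma corr_term_succ n s (rho : 'I_b) k :
  corr_term n.+1 s (b%:Z * k + rho%:Z) =
  \sum_(J : {ffun 'I_r -> 'I_(size p)})
     step_weight s (J, rho) * corr_term n (step_shift s (J, rho)) k.
Proof.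
rewrite /corr_term; under eq_bigr => t _ do rewrite GpolyS coefzM.
rewrite bigA_distr_bigA /=; apply: eq_bigr => J _.
rewrite /step_weight -mulrA.
rewrite -(prodr_if0 (fun t => (step_offset s (J, rho) t %% b)%Z == 0)) -big_split /=.
apply: eq_bigr => t _.
congr (_ * _); rewrite shiftz_step; set o := step_offset s (J, rho) t.
have b_gt0 : 0 < b%:Z by lia.
have ge0_mod : 0 <= (o %% b)%Z by apply: modz_ge0; lia.
have lt_mod : (o %% b)%Z < b%:Z by rewrite ltz_pmod.
have -> : b%:Z * k + rho%:Z + shiftz (s t) - (J t)%:Z =
          b%:Z * (k + (o %/ b)%Z) + (absz (o %% b)%Z)%:Z.
  have -> : b%:Z * k + rho%:Z + shiftz (s t) - (J t)%:Z = b%:Z * k + o.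
    by rewrite /o /step_offset /= !addrA.
  by rewrite {1}(divz_eq o b%:Z) abszE ger0_norm //; ring.
rewrite coefz_comp_Xn; last lia.
by congr (if _ then _ else _); apply/eqP/eqP; lia.
Qed.

Lemma corr_succ n s : corr n.+1 s = \sum_s' transfer s s' * corr n s'.
Proof.
pose B := (size (Gpoly n.+1) + M + (size (Gpoly n) + M))%N.
rewrite -(@corr_sumz _ _ (b * B)); last by rewrite /B; nia.
have le_B : (size (Gpoly n) + M <= B)%N by rewrite leq_addl.
rewrite sumz_split_mod.
under eq_bigr => rho _.
  under eq_sumz => k do rewrite corr_term_succ.
  rewrite sumz_sum.
  under eq_bigr => J _ do rewrite sumz_mull (corr_sumz _ le_B).
  over.
by rewrite exchange_big pair_big sum_collect.
Qed.

Definition transfer_mx : 'M[C]_#|{: shifts}| :=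
  \matrix_(i, j) transfer (enum_val i) (enum_val j).

Definition corr_vec n : 'cV[C]_#|{: shifts}| := \col_i corr n (enum_val i).

Lemma corr_vecE n : corr_vec n = transfer_mx ^+ n *m corr_vec 0.
Proof.
elim: n => [|n IHn]; first by rewrite mul1mx.
have -> : corr_vec n.+1 = transfer_mx *m corr_vec n.
  apply/colP => i; rewrite !mxE corr_succ big_enum_val.
  by apply: eq_bigr => j _; rewrite !mxE.
by rewrite IHn exprS mulmxA.
Qed.

End TransferMatrix.

Section PowerSums.
Variables (C : comNzRingType) (p q : {poly C}) (b m : nat) (alpha : 'I_m -> nat).

Definition offsets : seq nat := flatten [seq nseq (alpha j) (j : nat) | j <- enum 'I_m].

Lemma size_offsets : size offsets = (\sum_(j < m) alpha j)%N.
Proof.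
rewrite size_flatten /shape -map_comp sumnE big_map big_enum /=.
by apply: eq_bigr => j _; rewrite size_nseq.
Qed.

Lemma offsets_lt t : (t < size offsets)%N -> (nth 0%N offsets t < m)%N.
Proof.
by move=> /(mem_nth 0%N) /flattenP [_ /mapP [j _ ->] /nseqP [-> _]].
Qed.

Lemma prod_offsets (x : nat -> C) :
  \prod_(j < m) x j ^+ alpha j = \prod_(t < size offsets) x (nth 0%N offsets t).
Proof.
rewrite -(big_mkord xpredT (fun t => x (nth 0%N offsets t))) -(big_nth 0%N xpredT x).
rewrite big_flatten big_map big_enum /=; apply: eq_bigr => j _.
by rewrite big_nseq; elim: (alpha j) => [|k IHk]; rewrite ?expr0 // exprS IHk.
Qed.

Local Notation r := (size offsets).
Local Notation M := (size p + size q + m)%N.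
Local Notation d t := (nth 0%N offsets (t : 'I_r)).

Definition init_shift (I : {ffun 'I_r -> 'I_(size q)}) : shifts r M :=
  [ffun t => inord (d t + M - I t)].

Lemma shiftz_init I t : shiftz (init_shift I t) = (d t)%:Z - (I t)%:Z.
Proof.
rewrite /init_shift /shiftz ffunE inordK.
  by have := ltn_ord (I t); lia.
by have := ltn_ord (I t); have := offsets_lt (ltn_ord t); lia.
Qed.

Definition init_weight (s : shifts r M) : C :=
  \sum_(I : {ffun 'I_r -> 'I_(size q)}) (\prod_t q`_(I t)) * (init_shift I == s)%:R.

Lemma coefcE n k : coefc p q b n k = coefz (Fpoly p q b n) k.
Proof. by case: k. Qed.

Lemma useq_sumz n B : (0 < r)%N -> (size (Fpoly p q b n) + m <= B)%N ->
  useq p q b alpha n = sumz (fun k => \prod_(t < r) coefz (Fpoly p q b n) (k + (d t)%:Z)) B.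
Proof.
move=> r_gt0 le_B; set f := fun k => _.
have supp_f k : f k != 0 -> - m%:Z <= k < (size (Fpoly p q b n) + m)%:Z.
  apply: (prod_coefz_supp (e := fun t => (d t)%:Z) (t0 := Ordinal r_gt0)).
  by have := offsets_lt (ltn_ord (Ordinal r_gt0)); lia.
rewrite /sumz (@sumz_win_eq _ _ m (size (Fpoly p q b n) + m + m)); first last.
- by move=> k /supp_f; lia.
- by move=> k /supp_f; lia.
rewrite /useq /sumz_win -{1}[(size _ + m + m)%N]subn0 big_mkord.
apply: eq_bigr => i _.
rewrite (prod_offsets (fun j => coefc p q b n (i%:Z - m%:Z + j%:Z))).
by apply: eq_bigr => t _; rewrite coefcE.
Qed.

Lemma prod_coefz_Fpoly n k :
  \prod_(t < r) coefz (Fpoly p q b n) (k + (d t)%:Z) =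
  \sum_(I : {ffun 'I_r -> 'I_(size q)})
     (\prod_t q`_(I t)) * corr_term p b n (init_shift I) k.
Proof.
rewrite /corr_term; under eq_bigr => t _ do rewrite [Fpoly _ _ _ _]/= coefzM.
rewrite bigA_distr_bigA /=; apply: eq_bigr => I _; rewrite -big_split /=.
by apply: eq_bigr => t _; rewrite shiftz_init addrA.
Qed.

Lemma useq_corr n : (0 < r)%N ->
  useq p q b alpha n = \sum_(s : shifts r M) init_weight s * corr p b n s.
Proof.
move=> r_gt0; pose B := (size (Fpoly p q b n) + m + (size (Gpoly p b n) + M))%N.
rewrite (@useq_sumz n B) ?leq_addr //.
under eq_sumz => k do rewrite prod_coefz_Fpoly.
have le_B : (size (Gpoly p b n) + M <= B)%N by rewrite leq_addl.
rewrite sumz_sum; under eq_bigr => I _ do rewrite sumz_mull (corr_sumz r_gt0 _ le_B).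
by rewrite sum_collect.
Qed.

End PowerSums.

Lemma useq_rational_gf (C : comNzRingType) (p q : {poly C}) (b m : nat)
    (alpha : 'I_m -> nat) :
  (2 <= b)%N -> (exists j, alpha j <> 0%N) -> rational_gf (useq p q b alpha).
Proof.
move=> b_ge2 [j alpha_j].
have r_gt0 : (0 < size (offsets alpha))%N.
  by rewrite size_offsets (bigD1 j) //= ltn_addr // lt0n; apply/eqP.
have size_p : (size p <= size p + size q + m)%N by rewrite -addnA leq_addr.
pose r := size (offsets alpha); pose M := (size p + size q + m)%N.
pose w : 'rV[C]_#|{: shifts r M}| := \row_i init_weight (enum_val i).
apply: (eq_rational_gf _ (rational_gf_mxpow (transfer_mx p b r M) w (corr_vec p b r M 0))).
move=> n; rewrite -mulmxA -(corr_vecE r_gt0 b_ge2 size_p) (useq_corr _ _ _ _ r_gt0).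
by rewrite !mxE [RHS]big_enum_val; apply: eq_bigr => i _; rewrite !mxE.
Qed.

Theorem theorem4p1 (R : realType) (p q : {poly R[i]}) (b : nat) (m : nat)
    (alpha : 'I_m -> nat) :
  (2 <= b)%N -> (exists j, alpha j <> 0%N) ->
  exists (P Q : {poly R[i]}),
    Q`_0 != 0 /\
    forall n : nat,
      P`_n = \sum_(i < n.+1) Q`_i * useq p q b alpha (n - i).
Proof. exact: useq_rational_gf. Qed.
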